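(* There is $c>0$ independent of $h$ such that for all $u\in C^0(\bar I)$ and $v\in C^0(\bar I)^d$ with $|v(z)|=1$ for all $z\in\mathcal N_2(\mathcal T_h)$, $$\|\mathcal I_{h,2}(uv)\|_{L^1(I)^d}\le c\|\mathcal I_{h,2}u\|_{L^1(I)}.$$
   Context: Mesh notation: $I=(a,b)\subset\mathbb R$, $a=x_0<x_1<\dots<x_M=b$, $I_i=[x_{i-1},x_i]$, $h_i=x_i-x_{i-1}$, $h=\max_i h_i$, $\mathcal T_h=\{I_1,\dots,I_M\}$. Let $m_i=(x_{i-1}+x_i)/2$, $\mathcal N_1(\mathcal T_h)=\{x_0,\dots,x_M\}$, $\mathcal N_2(\mathcal T_h)=\mathcal N_1(\mathcal T_h)\cup\{m_1,\dots,m_M\}$. $\mathcal I_{h,2}$ is the continuous piecewise quadratic nodal interpolant defined by $\mathcal I_{h,2}v(z)=v(z)$ for $z\in\mathcal N_2(\mathcal T_h)$ (componentwise for vector-valued functions). *)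

From Stdlib Require Import Reals Lra.
From Coquelicot Require Import Coquelicot.
Open Scope R_scope.

Definition is_mesh (a b : R) (M : nat) (x : nat -> R) : Prop :=
  (1 <= M)%nat /\ x 0%nat = a /\ x M = b /\
  (forall i : nat, (1 <= i <= M)%nat -> x (i - 1)%nat < x i).

Definition midpt (x : nat -> R) (i : nat) : R := (x (i - 1)%nat + x i) / 2.

Definition in_N2 (M : nat) (x : nat -> R) (z : R) : Prop :=
  (exists i : nat, (i <= M)%nat /\ z = x i) \/
  (exists i : nat, (1 <= i <= M)%nat /\ z = midpt x i).

(* Quadratic Lagrange interpolant of g on element I_i = [x_{i-1}, x_i],
   through the nodes x_{i-1}, m_i, x_i. *)
Definition lagr2 (x : nat -> R) (g : R -> R) (i : nat) (t : R) : R :=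
  let p := x (i - 1)%nat in
  let q := x i in
  let m := midpt x i in
  g p * ((t - m) * (t - q)) / ((p - m) * (p - q)) +
  g m * ((t - p) * (t - q)) / ((m - p) * (m - q)) +
  g q * ((t - p) * (t - m)) / ((q - p) * (q - m)).

Fixpoint p2_loc (x : nat -> R) (g : R -> R) (i fuel : nat) (t : R) : R :=
  match fuel with
  | O => lagr2 x g i t
  | S f => if Rle_dec t (x i) then lagr2 x g i t else p2_loc x g (S i) f t
  end.

(* The continuous piecewise quadratic nodal interpolant I_{h,2} g
   (relevant on [a,b] = [x 0, x M]; at interior vertices both adjacent
   local interpolants agree, so the choice of element there is immaterial). *)
Definition interp2 (M : nat) (x : nat -> R) (g : R -> R) (t : R) : R :=
  p2_loc x g 1%nat (M - 1)%nat t.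

(* Vector-valued functions R -> R^d are represented as R -> (nat -> R);
   only components 0..d-1 are meaningful. Interpolation is componentwise. *)
Definition interp2_vec (M : nat) (x : nat -> R) (w : R -> nat -> R)
  (t : R) (k : nat) : R :=
  interp2 M x (fun s => w s k) t.

Fixpoint sumsq (d : nat) (y : nat -> R) : R :=
  match d with
  | O => 0
  | S n => sumsq n y + (y n) ^ 2
  end.

Definition enorm (d : nat) (y : nat -> R) : R := sqrt (sumsq d y).

Definition cont_on (a b : R) (f : R -> R) : Prop :=
  forall t, a <= t <= b -> forall eps, 0 < eps -> exists delta, 0 < delta /\
    forall s, a <= s <= b -> Rabs (s - t) < delta -> Rabs (f s - f t) < eps.

Definition L1 (a b : R) (f : R -> R) : R := RInt (fun t => Rabs (f t)) a b.
Definition L1vec (d : nat) (a b : R) (w : R -> nat -> R) : R :=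
  RInt (fun t => enorm d (w t)) a b.

(* Mapped affinely to the reference element [0,1], a quadratic on one mesh
   cell is a0 phi0 + a1 phi1 + a2 phi2 with nodal values a_j.  On the
   three-dimensional space of quadratics every norm is equivalent; concretely,
   a dual basis psi_j with sup |psi_j| <= 10 gives |a_j| <= 10 ||Q||_{L^1(0,1)},
   while |v| = 1 at the nodes bounds the interpolant of u v pointwise by
   2 (|a0| + |a1| + |a2|).  Hence the estimate holds on each cell with c = 60,
   the common factor h_i coming from the change of variables, and summing over
   the cells gives the theorem. *)
From Stdlib Require Import Reals Lra Psatz FunctionalExtensionality.
From Coquelicot Require Import Coquelicot.
Open Scope R_scope.

Lemma continuous_of_ex_derive (f : R -> R) (s : R) :
  (forall t, ex_derive f t) -> continuous f s.
Proof. intros H; apply (@ex_derive_continuous R_AbsRing R_NormedModule); auto. Qed.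

Lemma ex_RInt_of_continuous (f : R -> R) (a b : R) :
  (forall t, continuous f t) -> ex_RInt f a b.
Proof. intros H; apply (@ex_RInt_continuous R_CompleteNormedModule); auto. Qed.

Lemma RInt_antiderivative (f P : R -> R) (a b : R) :
  (forall s, is_derive P s (f s)) -> (forall s, continuous f s) ->
  RInt f a b = P b - P a.
Proof.
  intros HP Hf. apply (@is_RInt_unique R_CompleteNormedModule).
  apply (@is_RInt_derive R_CompleteNormedModule); auto.
Qed.

Lemma abs_RInt_mul_le (f psi : R -> R) (a b B : R) :
  a <= b -> (forall s, continuous f s) -> (forall s, continuous psi s) ->
  (forall s, a <= s <= b -> Rabs (psi s) <= B) ->
  Rabs (RInt (fun s => f s * psi s) a b) <= B * RInt (fun s => Rabs (f s)) a b.
Proof.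
  intros Hab Hf Hp Hb.
  assert (Cfpsi : forall s, continuous (fun s => f s * psi s) s)
    by (intros; apply (continuous_mult f psi); auto).
  assert (Cabs : forall s, continuous (fun s => Rabs (f s)) s)
    by (intros; apply continuous_Rabs_comp; auto).
  eapply Rle_trans.
  { apply abs_RInt_le; [exact Hab | apply ex_RInt_of_continuous; exact Cfpsi]. }
  replace (B * RInt (fun s => Rabs (f s)) a b)
    with (RInt (fun s => scal B (Rabs (f s))) a b)
    by (rewrite (@RInt_scal R_CompleteNormedModule); auto using ex_RInt_of_continuous).
  apply RInt_le; [exact Hab | | |].
  - apply ex_RInt_of_continuous; intros; apply continuous_Rabs_comp; auto.
  - apply (@ex_RInt_scal R_NormedModule); auto using ex_RInt_of_continuous.
  - intros s Hs. rewrite Rabs_mult. unfold scal; simpl; unfold mult; simpl.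
    rewrite Rmult_comm. apply Rmult_le_compat_r; [apply Rabs_pos | apply Hb; lra].
Qed.

(* [F] need only agree on the open cell with a function [f] continuous on all
   of R: the interpolants are polynomial only cell by cell. *)
Lemma RInt_cell_rescale (f F : R -> R) (p q : R) :
  p < q -> (forall t, continuous f t) -> (forall t, p < t < q -> f t = F t) ->
  ex_RInt F p q /\ RInt F p q = (q - p) * RInt (fun s => f ((q - p) * s + p)) 0 1.
Proof.
  intros Hpq Hf HfF.
  assert (Ext : forall t, Rmin p q < t < Rmax p q -> f t = F t)
    by (intros t; rewrite Rmin_left, Rmax_right by lra; auto).
  split.
  { apply (ex_RInt_ext f); auto using ex_RInt_of_continuous. }
  rewrite <- (RInt_ext f F p q Ext).
  assert (E : ex_RInt f ((q - p) * 0 + p) ((q - p) * 1 + p))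
    by (apply ex_RInt_of_continuous; auto).
  pose proof (@RInt_comp_lin R_CompleteNormedModule f (q - p) p 0 1 E) as H.
  replace ((q - p) * 0 + p) with p in H by ring.
  replace ((q - p) * 1 + p) with q in H by ring.
  rewrite <- H, (@RInt_scal R_CompleteNormedModule); [reflexivity|].
  apply ex_RInt_of_continuous; intros.
  apply (continuous_comp (fun s => (q - p) * s + p) f); auto.
  apply continuous_of_ex_derive; intros; auto_derive; easy.
Qed.

Lemma RInt_le_mul_partition (F G : R -> R) (x : nat -> R) (M : nat) (c : R) :
  (forall i, (1 <= i <= M)%nat ->
     ex_RInt F (x (i - 1)%nat) (x i) /\ ex_RInt G (x (i - 1)%nat) (x i) /\
     RInt F (x (i - 1)%nat) (x i) <= c * RInt G (x (i - 1)%nat) (x i)) ->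
  RInt F (x 0%nat) (x M) <= c * RInt G (x 0%nat) (x M).
Proof.
  intros Hcell.
  enough (H : forall n, (n <= M)%nat ->
    ex_RInt F (x 0%nat) (x n) /\ ex_RInt G (x 0%nat) (x n) /\
    RInt F (x 0%nat) (x n) <= c * RInt G (x 0%nat) (x n)) by apply H, le_n.
  induction n as [|n IH]; intros Hn.
  - rewrite !RInt_point. unfold zero; simpl.
    repeat split; try apply ex_RInt_point; lra.
  - destruct (IH ltac:(lia)) as [F0 [G0 I0]].
    destruct (Hcell (S n) ltac:(lia)) as [F1 [G1 I1]].
    replace (S n - 1)%nat with n in * by lia.
    repeat split; try (eapply ex_RInt_Chasles; eauto).
    rewrite <- (RInt_Chasles F _ (x n)), <- (RInt_Chasles G _ (x n)) by auto.
    unfold plus; simpl. lra.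
Qed.

Definition phi0 (s : R) := (2 * s - 1) * (s - 1).
Definition phi1 (s : R) := 4 * s * (1 - s).
Definition phi2 (s : R) := s * (2 * s - 1).
Definition Qf (a0 a1 a2 s : R) := a0 * phi0 s + a1 * phi1 s + a2 * phi2 s.

(* The dual basis of (phi0, phi1, phi2) in L^2(0,1). *)
Definition psi0 (s : R) := 9 - 36 * s + 30 * s ^ 2.
Definition psi1 (s : R) := -3/2 + 15 * s - 15 * s ^ 2.
Definition psi2 (s : R) := 3 - 24 * s + 30 * s ^ 2.

(* Coquelicot states its goals at [UniformSpace.sort R_UniformSpace]; [field]
   and [ring] only recognise equalities at [R]. *)
Ltac field_R := match goal with |- ?A = ?B => change (@eq R A B); field end.

Ltac continuous_poly :=
  intros; apply continuous_of_ex_derive; intros;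
  unfold Qf, phi0, phi1, phi2, psi0, psi1, psi2; auto_derive; easy.

Lemma continuous_Qf (a0 a1 a2 s : R) : continuous (Qf a0 a1 a2) s.
Proof. continuous_poly. Qed.

Lemma RInt_Qf_psi0 (a0 a1 a2 : R) : RInt (fun s => Qf a0 a1 a2 s * psi0 s) 0 1 = a0.
Proof.
  rewrite (RInt_antiderivative _ (fun s =>
      a0 * (9*s - 63/2*s^2 + 52*s^3 - 81/2*s^4 + 12*s^5)
    + a1 * (18*s^2 - 60*s^3 + 66*s^4 - 24*s^5)
    + a2 * (-9/2*s^2 + 18*s^3 - 51/2*s^4 + 12*s^5))).
  - field_R.
  - intros s; auto_derive; [easy|]. unfold Qf, phi0, phi1, phi2, psi0. field_R.
  - continuous_poly.
Qed.

Lemma RInt_Qf_psi1 (a0 a1 a2 : R) : RInt (fun s => Qf a0 a1 a2 s * psi1 s) 0 1 = a1.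
Proof.
  rewrite (RInt_antiderivative _ (fun s =>
      a0 * (-3/2*s + 39/4*s^2 - 21*s^3 + 75/4*s^4 - 6*s^5)
    + a1 * (-3*s^2 + 22*s^3 - 30*s^4 + 12*s^5)
    + a2 * (3/4*s^2 - 6*s^3 + 45/4*s^4 - 6*s^5))).
  - field_R.
  - intros s; auto_derive; [easy|]. unfold Qf, phi0, phi1, phi2, psi1. field_R.
  - continuous_poly.
Qed.

Lemma RInt_Qf_psi2 (a0 a1 a2 : R) : RInt (fun s => Qf a0 a1 a2 s * psi2 s) 0 1 = a2.
Proof.
  rewrite (RInt_antiderivative _ (fun s =>
      a0 * (3*s - 33/2*s^2 + 36*s^3 - 69/2*s^4 + 12*s^5)
    + a1 * (6*s^2 - 36*s^3 + 54*s^4 - 24*s^5)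
    + a2 * (-3/2*s^2 + 10*s^3 - 39/2*s^4 + 12*s^5))).
  - field_R.
  - intros s; auto_derive; [easy|]. unfold Qf, phi0, phi1, phi2, psi2. field_R.
  - continuous_poly.
Qed.

Lemma Qf_coef_le_RInt_abs (a0 a1 a2 : R) :
  Rabs a0 + Rabs a1 + Rabs a2 <= 30 * RInt (fun s => Rabs (Qf a0 a1 a2 s)) 0 1.
Proof.
  assert (Hcoef : forall (psi : R -> R) (a : R),
    (forall s, continuous psi s) -> (forall s, 0 <= s <= 1 -> Rabs (psi s) <= 10) ->
    RInt (fun s => Qf a0 a1 a2 s * psi s) 0 1 = a ->
    Rabs a <= 10 * RInt (fun s => Rabs (Qf a0 a1 a2 s)) 0 1).
  { intros psi a Hc Hb <-. apply abs_RInt_mul_le; auto using continuous_Qf; lra. }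
  pose proof (Hcoef psi0 a0 ltac:(continuous_poly)
    ltac:(intros s Hs; unfold psi0; apply Rabs_le; split; nra) (RInt_Qf_psi0 a0 a1 a2)).
  pose proof (Hcoef psi1 a1 ltac:(continuous_poly)
    ltac:(intros s Hs; unfold psi1; apply Rabs_le; split; nra) (RInt_Qf_psi1 a0 a1 a2)).
  pose proof (Hcoef psi2 a2 ltac:(continuous_poly)
    ltac:(intros s Hs; unfold psi2; apply Rabs_le; split; nra) (RInt_Qf_psi2 a0 a1 a2)).
  lra.
Qed.

Lemma sumsq_ge0 (d : nat) (y : nat -> R) : 0 <= sumsq d y.
Proof. induction d; simpl; nra. Qed.

Lemma sumsq_of_enorm1 (d : nat) (y : nat -> R) : enorm d y = 1 -> sumsq d y = 1.
Proof.
  unfold enorm; intros H.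
  pose proof (sqrt_sqrt _ (sumsq_ge0 d y)) as E. rewrite H in E. lra.
Qed.

Lemma sumsq_comb3_le (d : nat) (c0 c1 c2 : R) (w0 w1 w2 : nat -> R) :
  sumsq d (fun k => c0 * w0 k + c1 * w1 k + c2 * w2 k)
  <= 3 * (c0 ^ 2 * sumsq d w0 + c1 ^ 2 * sumsq d w1 + c2 ^ 2 * sumsq d w2).
Proof.
  induction d as [|d IH]; cbn [sumsq]; [lra|].
  assert (Hsq3 : forall X Y Z : R, (X + Y + Z) ^ 2 <= 3 * (X ^ 2 + Y ^ 2 + Z ^ 2))
    by (intros X Y Z; pose proof (pow2_ge_0 (X - Y)); pose proof (pow2_ge_0 (Y - Z));
        pose proof (pow2_ge_0 (X - Z)); nra).
  pose proof (Hsq3 (c0 * w0 d) (c1 * w1 d) (c2 * w2 d)) as H.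
  rewrite !Rpow_mult_distr in H. lra.
Qed.

Lemma continuous_sumsq (d : nat) (g : nat -> R -> R) (t : R) :
  (forall k, continuous (g k) t) -> continuous (fun s => sumsq d (fun k => g k s)) t.
Proof.
  intros Hg. induction d as [|d IH]; simpl.
  - apply continuous_const.
  - apply (continuous_plus (fun s => sumsq d (fun k => g k s)) (fun s => g d s ^ 2)); auto.
    apply (continuous_comp (g d) (fun y => y ^ 2)); auto.
    apply continuous_of_ex_derive; intros; auto_derive; easy.
Qed.

Lemma continuous_enorm (d : nat) (g : nat -> R -> R) (t : R) :
  (forall k s, continuous (g k) s) -> continuous (fun s => enorm d (fun k => g k s)) t.
Proof. intros Hg. apply continuous_sqrt_comp, continuous_sumsq; auto. Qed.

Lemma phi_abs_le1 (s : R) :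
  0 <= s <= 1 -> Rabs (phi0 s) <= 1 /\ Rabs (phi1 s) <= 1 /\ Rabs (phi2 s) <= 1.
Proof.
  intros Hs; unfold phi0, phi1, phi2.
  pose proof (pow2_ge_0 (2 * s - 1)); pose proof (pow2_ge_0 (4 * s - 3));
  pose proof (pow2_ge_0 (4 * s - 1)).
  repeat split; apply Rabs_le; split; nra.
Qed.

Definition Qvec (a0 a1 a2 : R) (w0 w1 w2 : nat -> R) (s : R) : nat -> R :=
  fun k => a0 * phi0 s * w0 k + a1 * phi1 s * w1 k + a2 * phi2 s * w2 k.

(* Cauchy-Schwarz over the three terms gives the factor sqrt 3 <= 2. *)
Lemma enorm_Qvec_le (d : nat) (a0 a1 a2 : R) (w0 w1 w2 : nat -> R) (s : R) :
  sumsq d w0 = 1 -> sumsq d w1 = 1 -> sumsq d w2 = 1 -> 0 <= s <= 1 ->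
  enorm d (Qvec a0 a1 a2 w0 w1 w2 s) <= 2 * (Rabs a0 + Rabs a1 + Rabs a2).
Proof.
  intros H0 H1 H2 Hs.
  destruct (phi_abs_le1 s Hs) as [B0 [B1 B2]].
  pose proof (sumsq_comb3_le d (a0 * phi0 s) (a1 * phi1 s) (a2 * phi2 s) w0 w1 w2) as S.
  rewrite H0, H1, H2 in S.
  assert (Hphi : forall a p, Rabs p <= 1 -> (a * p) ^ 2 <= Rabs a * Rabs a).
  { intros a p Hp. rewrite <- (pow2_abs (a * p)), Rabs_mult.
    pose proof (Rabs_pos a); pose proof (Rabs_pos p).
    assert (Rabs p * Rabs p <= 1) by nra. nra. }
  pose proof (Hphi a0 _ B0); pose proof (Hphi a1 _ B1); pose proof (Hphi a2 _ B2).
  pose proof (Rabs_pos a0); pose proof (Rabs_pos a1); pose proof (Rabs_pos a2).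
  unfold enorm, Qvec.
  rewrite <- (sqrt_square (2 * (Rabs a0 + Rabs a1 + Rabs a2))) by lra.
  apply sqrt_le_1_alt. nra.
Qed.

Lemma RInt_enorm_Qvec_le (d : nat) (a0 a1 a2 : R) (w0 w1 w2 : nat -> R) :
  sumsq d w0 = 1 -> sumsq d w1 = 1 -> sumsq d w2 = 1 ->
  RInt (fun s => enorm d (Qvec a0 a1 a2 w0 w1 w2 s)) 0 1
  <= 2 * (Rabs a0 + Rabs a1 + Rabs a2).
Proof.
  intros H0 H1 H2.
  apply Rle_trans with (RInt (fun _ => 2 * (Rabs a0 + Rabs a1 + Rabs a2)) 0 1).
  2:{ rewrite RInt_const. unfold scal; simpl; unfold mult; simpl. lra. }
  apply RInt_le; [lra | | apply ex_RInt_const |].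
  - apply ex_RInt_of_continuous; intros.
    apply (continuous_enorm d (fun k s => Qvec a0 a1 a2 w0 w1 w2 s k)); intros.
    apply continuous_of_ex_derive; intros.
    unfold Qvec, phi0, phi1, phi2; auto_derive; easy.
  - intros s Hs. apply enorm_Qvec_le; auto; lra.
Qed.

Lemma mesh_le (a b : R) (M : nat) (x : nat -> R) :
  is_mesh a b M x -> forall j k, (j <= k <= M)%nat -> x j <= x k.
Proof.
  intros [_ [_ [_ Hlt]]] j k. induction k as [|k IH]; intros Hk.
  - replace j with 0%nat by lia. lra.
  - destruct (Nat.eq_dec j (S k)) as [->|Hne]; [lra|].
    pose proof (Hlt (S k) ltac:(lia)) as Hs. replace (S k - 1)%nat with k in Hs by lia.
    pose proof (IH ltac:(lia)). lra.
Qed.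

Lemma p2_loc_cell (a b : R) (M : nat) (x : nat -> R) (g : R -> R) (t : R) (i : nat) :
  is_mesh a b M x -> (1 <= i <= M)%nat -> x (i - 1)%nat < t <= x i ->
  forall fuel j, (1 <= j <= i)%nat -> (j + fuel = M)%nat ->
  p2_loc x g j fuel t = lagr2 x g i t.
Proof.
  intros Hm Hi Ht fuel. induction fuel as [|fuel IH]; intros j Hj Hfuel; simpl.
  - replace i with j by lia. reflexivity.
  - destruct (Rle_dec t (x j)) as [Hle|Hgt].
    + destruct (Nat.eq_dec i j) as [->|Hne]; [reflexivity|].
      pose proof (mesh_le a b M x Hm j (i - 1)%nat ltac:(lia)). lra.
    + apply IH; [|lia]. destruct (Nat.eq_dec i j) as [->|]; [lra | lia].
Qed.

Lemma interp2_cell (a b : R) (M : nat) (x : nat -> R) (g : R -> R) (t : R) (i : nat) :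
  is_mesh a b M x -> (1 <= i <= M)%nat -> x (i - 1)%nat < t <= x i ->
  interp2 M x g t = lagr2 x g i t.
Proof. intros Hm Hi Ht. apply (p2_loc_cell a b M x g t i Hm Hi Ht); lia. Qed.

Lemma continuous_lagr2 (x : nat -> R) (g : R -> R) (i : nat) (t : R) :
  continuous (lagr2 x g i) t.
Proof. apply continuous_of_ex_derive; intros; unfold lagr2; auto_derive; easy. Qed.

Lemma lagr2_rescale (x : nat -> R) (g : R -> R) (i : nat) (s : R) :
  x (i - 1)%nat < x i ->
  lagr2 x g i ((x i - x (i - 1)%nat) * s + x (i - 1)%nat)
  = Qf (g (x (i - 1)%nat)) (g (midpt x i)) (g (x i)) s.
Proof.
  intros H. unfold lagr2, Qf, midpt, phi0, phi1, phi2.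
  field. repeat split; lra.
Qed.

Lemma cell_estimate (d : nat) (a b : R) (M : nat) (x : nat -> R)
  (u : R -> R) (v : R -> nat -> R) (i : nat) :
  is_mesh a b M x -> (1 <= i <= M)%nat ->
  (forall z, in_N2 M x z -> enorm d (v z) = 1) ->
  let F t := enorm d (interp2_vec M x (fun s k => u s * v s k) t) in
  let G t := Rabs (interp2 M x u t) in
  ex_RInt F (x (i - 1)%nat) (x i) /\ ex_RInt G (x (i - 1)%nat) (x i) /\
  RInt F (x (i - 1)%nat) (x i) <= 60 * RInt G (x (i - 1)%nat) (x i).
Proof.
  intros Hm Hi Hv F G.
  assert (Hpq : x (i - 1)%nat < x i) by (apply Hm; lia).
  set (p := x (i - 1)%nat) in *; set (q := x i) in *; set (m := midpt x i).
  destruct (RInt_cell_rescale (fun t => enorm d (fun k => lagr2 x (fun s => u s * v s k) i t))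
              F p q Hpq) as [XF EF].
  { intros; apply continuous_enorm; intros; apply continuous_lagr2. }
  { intros t Ht. unfold F, interp2_vec. f_equal. apply functional_extensionality; intros k.
    symmetry; apply (interp2_cell a b M); unfold p, q in *; auto; lra. }
  destruct (RInt_cell_rescale (fun t => Rabs (lagr2 x u i t)) G p q Hpq) as [XG EG].
  { intros; apply continuous_Rabs_comp, continuous_lagr2. }
  { intros t Ht. unfold G. f_equal.
    symmetry; apply (interp2_cell a b M); unfold p, q in *; auto; lra. }
  repeat split; auto.
  rewrite EF, EG.
  rewrite (RInt_ext _ (fun s => enorm d (Qvec (u p) (u m) (u q) (v p) (v m) (v q) s)))
    by (intros s _; f_equal; apply functional_extensionality; intros k;
        unfold p, q, m; rewrite lagr2_rescale by exact Hpq; unfold Qf, Qvec; ring).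
  rewrite (RInt_ext (fun s => Rabs (lagr2 x u i ((q - p) * s + p)))
                    (fun s => Rabs (Qf (u p) (u m) (u q) s)))
    by (intros s _; unfold p, q, m; rewrite lagr2_rescale by exact Hpq; reflexivity).
  assert (Hnode : forall z, in_N2 M x z -> sumsq d (v z) = 1)
    by (intros; apply sumsq_of_enorm1; auto).
  assert (Np : in_N2 M x p) by (left; exists (i - 1)%nat; split; [lia | reflexivity]).
  assert (Nm : in_N2 M x m) by (right; exists i; split; [lia | reflexivity]).
  assert (Nq : in_N2 M x q) by (left; exists i; split; [lia | reflexivity]).
  pose proof (RInt_enorm_Qvec_le d (u p) (u m) (u q) (v p) (v m) (v q)
    (Hnode p Np) (Hnode m Nm) (Hnode q Nq)).
  pose proof (Qf_coef_le_RInt_abs (u p) (u m) (u q)).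
  replace (60 * ((q - p) * _))
    with ((q - p) * (60 * RInt (fun s => Rabs (Qf (u p) (u m) (u q) s)) 0 1)) by ring.
  apply Rmult_le_compat_l; lra.
Qed.

Theorem lemmaA3 :
  forall (d : nat) (a b : R), a < b ->
  exists c : R, 0 < c /\
    forall (M : nat) (x : nat -> R), is_mesh a b M x ->
    forall (u : R -> R) (v : R -> nat -> R),
      cont_on a b u ->
      (forall k : nat, (k < d)%nat -> cont_on a b (fun s => v s k)) ->
      (forall z : R, in_N2 M x z -> enorm d (v z) = 1) ->
      L1vec d a b (interp2_vec M x (fun s k => u s * v s k))
        <= c * L1 a b (interp2 M x u).
Proof.
  intros d a b _. exists 60. split; [lra|].
  (* The interpolants only see nodal values, so continuity of u and v is not used. *)
  intros M x Hm u v _ _ Hv.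
  pose proof Hm as [_ [Hx0 [HxM _]]].
  unfold L1vec, L1. rewrite <- Hx0, <- HxM.
  apply RInt_le_mul_partition. intros i Hi.
  exact (cell_estimate d a b M x u v i Hm Hi Hv).
Qed.
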